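(* Let $(A;A^+)$ be an $\mathbb{F}_1$-algebra pair and $(M,\le)$ a partially ordered $A$-module. (i) If $\mathbb{B}(M,\le)$ is finitely generated as a $\mathbb{B}[A;A^+]$-module, then $M$ is finitely generated as an $A$-module. (ii) Suppose $(A;A^+)$ is an $\mathbb{F}_1$-domain. If $\mathbb{B}(M,\le)$ is a projective $\mathbb{B}[A;A^+]$-module, then $M$ is a free $A$-module.
   Context: $(A;A^+)$: $A$ a commutative monoid with zero (multiplicative), $A^+\subseteq A$ a sharp submonoid containing $0$ (only unit $1$). $A$-modules are pointed sets with $A$-action ($0$ acts to the base point); free $A$-modules are wedge sums of copies of $A$. $\mathbb{B}[A;A^+]$ is the idempotent semiring of finitely generated $A^+$-submodules of $A$ ($\vee$ = union, $+$ = elementwise product). A partially ordered $A$-module: $A$-module with a partial order such that $fv\le gv$ whenever $f\in A^+g$, and $v\le w\Rightarrow fv\le fw$ for $f\in A$. $\mathbb{B}(M,\le)$ is the set of $A^+$-submodules of $M$ that are lower sets and are downward closures of finitely generated $A^+$-submodules, a $\mathbb{B}[A;A^+]$-module under union and elementwise multiplication. $(A;A^+)$ is an $\mathbb{F}_1$-domain if $A^+\setminus\{0\}$ is cancellative, $A$ is a localisation of $A^+$, and $A^+$ is integrally closed (saturated) in $A$: $f\in A$ and $f^n\in A^+$ for some $n\ge1$ imply $f\in A^+$. Projective: every surjection onto the module has a section. *)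

From Stdlib Require Import List.
Import ListNotations.

Section F1Defs.

Variable A : Type.
Variable mul : A -> A -> A.
Variable one zero : A.
Variable Ap : A -> Prop.

Definition is_cmonoid0 : Prop :=
  (forall a b c, mul a (mul b c) = mul (mul a b) c) /\
  (forall a b, mul a b = mul b a) /\
  (forall a, mul one a = a) /\
  (forall a, mul zero a = zero).

(* A^+ is a sharp submonoid containing 0: its only unit is 1. *)
Definition is_sharp_submonoid0 : Prop :=
  Ap one /\ Ap zero /\
  (forall a b, Ap a -> Ap b -> Ap (mul a b)) /\
  (forall a b, Ap a -> Ap b -> mul a b = one -> a = one).

Definition F1_pair : Prop := is_cmonoid0 /\ is_sharp_submonoid0.

Fixpoint mpow (f : A) (n : nat) : A :=
  match n with O => one | S k => mul f (mpow f k) end.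

Definition F1_domain : Prop :=
  F1_pair /\
  ((forall a b, Ap a -> Ap b -> a <> zero -> b <> zero -> mul a b <> zero) /\
   (forall a b c, Ap a -> Ap b -> Ap c -> a <> zero -> b <> zero -> c <> zero ->
                  mul a b = mul a c -> b = c)) /\
  (* A is a localisation of A^+ at some multiplicative subset S of A^+ *)
  (exists Sm : A -> Prop,
      (forall s, Sm s -> Ap s) /\ Sm one /\
      (forall s t, Sm s -> Sm t -> Sm (mul s t)) /\
      (forall s, Sm s -> exists u, mul s u = one) /\
      (forall a, exists s, Sm s /\ Ap (mul s a))) /\
  (* A^+ is integrally closed (saturated) in A *)
  (forall f n, 1 <= n -> Ap (mpow f n) -> Ap f).

(* ---- the semiring B[A;A^+] : finitely generated A^+-submodules of A ---- *)
Definition fg_subA (S : A -> Prop) : Prop :=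
  exists l : list A, forall a,
    S a <-> (a = zero \/ exists h g, Ap h /\ In g l /\ a = mul h g).

Definition B_union {X : Type} (S T : X -> Prop) : X -> Prop := fun a => S a \/ T a.
Definition B_prod (S T : A -> Prop) : A -> Prop :=
  fun a => exists s t, S s /\ T t /\ a = mul s t.
Definition B_zero : A -> Prop := fun a => a = zero.
(* the unit of B[A;A^+] is A^+ itself *)

Variable M : Type.
Variable act : A -> M -> M.
Variable base : M.

Definition is_Amodule : Prop :=
  (forall m, act one m = m) /\
  (forall f g m, act (mul f g) m = act f (act g m)) /\
  (forall m, act zero m = base) /\
  (forall f, act f base = base).

Variable le : M -> M -> Prop.

Definition is_POmodule : Prop :=
  (forall v, le v v) /\
  (forall v w, le v w -> le w v -> v = w) /\
  (forall u v w, le u v -> le v w -> le u w) /\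
  (forall f g v, (exists h, Ap h /\ f = mul h g) -> le (act f v) (act g v)) /\
  (forall f v w, le v w -> le (act f v) (act f w)).

Definition A_fin_gen : Prop :=
  exists l : list M, forall v, v = base \/ exists a m, In m l /\ v = act a m.

(* M is free: the A-module map from the wedge sum of copies of A indexed by I,
   sending the generator of the i-th copy to e i, is bijective.  Elements of
   the wedge sum are the base point and pairs (i,a) with a <> 0. *)
Definition A_free : Prop :=
  exists (I : Type) (e : I -> M),
    (forall i a, a <> zero -> act a (e i) <> base) /\
    (forall i j a b, a <> zero -> b <> zero -> act a (e i) = act b (e j) ->
                     i = j /\ a = b) /\
    (forall v, v <> base -> exists i a, a <> zero /\ v = act a (e i)).

Definition gen_subM (l : list M) : M -> Prop :=
  fun v => v = base \/ exists h m, Ap h /\ In m l /\ v = act h m.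
Definition down (N : M -> Prop) : M -> Prop := fun w => exists v, N v /\ le w v.

Definition inBM (N : M -> Prop) : Prop :=
  (N base /\ forall h v, Ap h -> N v -> N (act h v)) /\
  (forall v w, le w v -> N v -> N w) /\
  (exists l : list M, forall w, N w <-> down (gen_subM l) w).

Definition BMt : Type := {N : M -> Prop | inBM N}.

Definition BM_bot : M -> Prop := fun w => le w base.
Definition BM_act (S : A -> Prop) (N : M -> Prop) : M -> Prop :=
  down (fun w => exists s v, S s /\ N v /\ w = act s v).

Definition BM_fin_gen : Prop :=
  exists gens : list BMt, forall N : BMt,
    exists coeffs : list ((A -> Prop) * BMt),
      (forall c, In c coeffs -> fg_subA (fst c) /\ In (snd c) gens) /\
      proj1_sig N = fold_right (fun c acc => B_union (BM_act (fst c) (proj1_sig (snd c))) acc)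
                               BM_bot coeffs.

Definition is_BModule (P : Type) (addP : P -> P -> P) (zeroP : P)
    (actP : (A -> Prop) -> P -> P) : Prop :=
  (forall x y z, addP x (addP y z) = addP (addP x y) z) /\
  (forall x y, addP x y = addP y x) /\
  (forall x, addP zeroP x = x) /\
  (forall S x y, fg_subA S -> actP S (addP x y) = addP (actP S x) (actP S y)) /\
  (forall S, fg_subA S -> actP S zeroP = zeroP) /\
  (forall S T x, fg_subA S -> fg_subA T ->
     actP (B_union S T) x = addP (actP S x) (actP T x)) /\
  (forall S T x, fg_subA S -> fg_subA T ->
     actP (B_prod S T) x = actP S (actP T x)) /\
  (forall x, actP Ap x = x) /\
  (forall x, actP B_zero x = zeroP).

(* B(M,<=) is projective: every surjective B[A;A^+]-module homomorphism onto
   it has a section that is a B[A;A^+]-module homomorphism. *)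
Definition BM_projective : Prop :=
  forall (P : Type) (addP : P -> P -> P) (zeroP : P) (actP : (A -> Prop) -> P -> P),
    is_BModule P addP zeroP actP ->
    forall p : P -> BMt,
      (forall x y, proj1_sig (p (addP x y)) = B_union (proj1_sig (p x)) (proj1_sig (p y))) ->
      proj1_sig (p zeroP) = BM_bot ->
      (forall S x, fg_subA S -> proj1_sig (p (actP S x)) = BM_act S (proj1_sig (p x))) ->
      (forall N, exists x, p x = N) ->
      exists s : BMt -> P,
        (forall N, p (s N) = N) /\
        (forall N1 N2 N3, proj1_sig N3 = B_union (proj1_sig N1) (proj1_sig N2) ->
                          s N3 = addP (s N1) (s N2)) /\
        (forall N0, proj1_sig N0 = BM_bot -> s N0 = zeroP) /\
        (forall S N N', fg_subA S -> proj1_sig N' = BM_act S (proj1_sig N) ->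
                        s N' = actP S (s N)).

End F1Defs.

(* (i) If the principal lower set of [v] lies in finitely many [s N_i], then [v]
   is an [A]-multiple of one of the finitely many generators of the [N_i].

   (ii) [B(M,<=)] is a quotient of the free [B[A;A^+]]-module on the set [M]:
   a finitely generated [A^+]-submodule [Q] of the free [A]-module on [M] maps
   to the lower set generated by [{c x | (x, c) in Q}].  A section assigns to
   each [v] finitely many coefficients [coef v] with [v = c x] for one of them.
   Call [x] basic if [(x, 1)] is in [coef x].  Every nonzero [v] is [c x] with
   [x] basic, and cancellation together with the saturation of [A^+] shows that
   [c] is unique and that basic elements with a common nonzero multiple are
   associates; one basic element from each class of associates is a basis. *)

From Stdlib Require Import List Classical ClassicalEpsilon FunctionalExtensionality PropExtensionality ProofIrrelevance Relations Lia.
Import ListNotations.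

Lemma predext {X : Type} (P Q : X -> Prop) : (forall x, P x <-> Q x) -> P = Q.
Proof.
  intro H; apply functional_extensionality; intro; apply propositional_extensionality; auto.
Qed.

Lemma sig_ext {X : Type} {P : X -> Prop} (u v : sig P) : proj1_sig u = proj1_sig v -> u = v.
Proof. apply eq_sig_hprop; intros; apply proof_irrelevance. Qed.

Lemma filter_length_lt {T} (f : T -> bool) (L : list T) x :
  In x L -> f x = false -> length (filter f L) < length L.
Proof.
  induction L as [|y L IH]; simpl; [intros []|].
  intros [->|H] Hf.
  - rewrite Hf; pose proof (filter_length_le f L); lia.
  - destruct (f y); simpl; specialize (IH H Hf); lia.
Qed.

(* Induction on [length L]: either [x0] lies on a cycle, or we restrict to the
   [P]-points reachable from [x0], which do not contain [x0]. *)
Lemma serial_clos_trans_cycle {T} (P : T -> Prop) (R : T -> T -> Prop) (L : list T) :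
  (forall x, In x L -> P x -> exists y, In y L /\ P y /\ R x y) ->
  (exists x, In x L /\ P x) -> exists x, P x /\ clos_trans T R x x.
Proof.
  remember (length L) as n; assert (Hlen : length L <= n) by lia; clear Heqn.
  revert L Hlen; induction n as [|n IH]; intros L Hlen Hsucc [x0 [Hx0 Px0]].
  - destruct L; simpl in *; [destruct Hx0|lia].
  - destruct (classic (clos_trans T R x0 x0)) as [Hc|Hc]; [eauto|].
    set (f := fun y => if excluded_middle_informative (P y /\ clos_trans T R x0 y)
                       then true else false).
    assert (Hf : forall y, f y = true <-> P y /\ clos_trans T R x0 y).
    { intro y; unfold f; destruct excluded_middle_informative; split; easy. }
    apply (IH (filter f L)).
    + assert (f x0 = false) by (destruct (f x0) eqn:E; [apply Hf in E; tauto|auto]).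
      pose proof (filter_length_lt f L x0 Hx0 H); lia.
    + intros y Hy Py; apply filter_In in Hy; destruct Hy as [Hy Hfy]; apply Hf in Hfy.
      destruct (Hsucc y Hy Py) as [z [Hz [Pz Rz]]]; exists z; split; auto.
      apply filter_In; split; auto; apply Hf; split; auto.
      eapply t_trans; [apply Hfy|]; apply t_step; auto.
    + destruct (Hsucc x0 Hx0 Px0) as [z [Hz [Pz Rz]]]; exists z; split; auto.
      apply filter_In; split; auto; apply Hf; split; auto; apply t_step; auto.
Qed.

Section Theory.

Variable A : Type.
Variable mul : A -> A -> A.
Variables one zero : A.
Variable Ap : A -> Prop.
Variable M : Type.
Variable act : A -> M -> M.
Variable base : M.
Variable le : M -> M -> Prop.
Hypothesis HA : F1_pair A mul one zero Ap.
Hypothesis HM : is_Amodule A mul one zero M act base.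
Hypothesis Hle : is_POmodule A mul Ap M act le.

Lemma mulA a b c : mul a (mul b c) = mul (mul a b) c.
Proof. apply HA. Qed.
Lemma mulC a b : mul a b = mul b a.
Proof. apply HA. Qed.
Lemma mul1 a : mul one a = a.
Proof. apply HA. Qed.
Lemma mulr1 a : mul a one = a.
Proof. rewrite mulC; apply mul1. Qed.
Lemma mul0 a : mul zero a = zero.
Proof. apply HA. Qed.
Lemma mulr0 a : mul a zero = zero.
Proof. rewrite mulC; apply mul0. Qed.
Lemma mulCA a b c : mul a (mul b c) = mul b (mul a c).
Proof. rewrite !mulA, (mulC a b); reflexivity. Qed.
Lemma mulACA a b c d : mul (mul a b) (mul c d) = mul (mul a c) (mul b d).
Proof. rewrite <- !mulA; f_equal; apply mulCA. Qed.

Lemma Ap1 : Ap one.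
Proof. apply HA. Qed.
Lemma Ap0 : Ap zero.
Proof. apply HA. Qed.
Lemma ApM a b : Ap a -> Ap b -> Ap (mul a b).
Proof. apply HA. Qed.
Lemma Ap_unit a b : Ap a -> Ap b -> mul a b = one -> a = one.
Proof. apply HA. Qed.

Lemma act1 m : act one m = m.
Proof. apply HM. Qed.
Lemma actM f g m : act (mul f g) m = act f (act g m).
Proof. apply HM. Qed.
Lemma act0 m : act zero m = base.
Proof. apply HM. Qed.
Lemma act_base f : act f base = base.
Proof. apply HM. Qed.

Lemma le_refl v : le v v.
Proof. apply Hle. Qed.
Lemma le_anti v w : le v w -> le w v -> v = w.
Proof. apply Hle. Qed.
Lemma le_trans u v w : le u v -> le v w -> le u w.
Proof. apply Hle. Qed.
Lemma le_actAp h g v : Ap h -> le (act (mul h g) v) (act g v).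
Proof. intro; apply Hle; eauto. Qed.
Lemma le_act f v w : le v w -> le (act f v) (act f w).
Proof. apply Hle. Qed.
Lemma le_Ap h v : Ap h -> le (act h v) v.
Proof. intro; rewrite <- (mulr1 h); rewrite <- (act1 v) at 2; apply le_actAp; auto. Qed.
Lemma le_base v : le base v.
Proof. rewrite <- (act0 v); apply le_Ap, Ap0. Qed.
Lemma le_base_eq v : le v base -> v = base.
Proof. intro; apply le_anti; auto using le_base. Qed.

(** * Principal lower sets and finite generation *)

Definition lower (v : M) : M -> Prop := down M le (gen_subM A Ap M act base [v]).

Lemma lowerE v w : lower v w <-> le w v.
Proof.
  split.
  - intros [u [[->|[h [m [Hh [[<-|[]] ->]]]]] Hw]].
    + eapply le_trans; eauto using le_base.
    + eapply le_trans; eauto using le_Ap.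
  - intro H; exists v; split; auto.
    right; exists one, v; rewrite act1; simpl; auto using Ap1.
Qed.

Lemma lower_inBM v : inBM A Ap M act base le (lower v).
Proof.
  split; [split|split].
  - apply lowerE, le_base.
  - intros h w Hh Hw; apply lowerE in Hw; apply lowerE.
    eapply le_trans; [apply le_Ap|]; eauto.
  - intros x y Hxy Hx; apply lowerE in Hx; apply lowerE; eapply le_trans; eauto.
  - exists [v]; intro; tauto.
Qed.

Definition lowerB (v : M) : BMt A Ap M act base le := exist _ (lower v) (lower_inBM v).

Lemma in_BM_span (cs : list ((A -> Prop) * BMt A Ap M act base le)) w :
  fold_right (fun c acc => B_union (BM_act A M act le (fst c) (proj1_sig (snd c))) acc)
    (BM_bot M base le) cs w <->
  BM_bot M base le w \/
  exists c, In c cs /\ BM_act A M act le (fst c) (proj1_sig (snd c)) w.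
Proof.
  induction cs as [|c cs IH]; simpl.
  - split; [auto|intros [H|[c [[] _]]]; auto].
  - unfold B_union at 1; rewrite IH; split.
    + intros [H|[H|[c' [H1 H2]]]]; eauto.
    + intros [H|[c' [[<-|H1] H2]]]; eauto.
Qed.

Lemma BM_common_generators (gens : list (BMt A Ap M act base le)) :
  exists l : list M, forall g w, In g gens -> proj1_sig g w ->
    exists u, proj1_sig g u /\ le w u /\ gen_subM A Ap M act base l u.
Proof.
  induction gens as [|g gs [l IH]].
  - exists []; intros g w [].
  - destruct (proj2_sig g) as [_ [_ [lg Hlg]]].
    exists (lg ++ l); intros g' w [<-|Hg'] Hw.
    + apply Hlg in Hw; destruct Hw as [u [Hu Hwu]].
      exists u; split; [apply Hlg; exists u; split; auto using le_refl|split; auto].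
      destruct Hu as [Hu|[h [m [Hh [Hm Hu]]]]]; [left; auto|right].
      exists h, m; auto using in_or_app.
    + destruct (IH g' w Hg' Hw) as [u [Hu [Hwu [Hb|[h [m [Hh [Hm Hum]]]]]]]];
        exists u; repeat split; auto; [left; auto|right].
      exists h, m; auto using in_or_app.
Qed.

Lemma A_fin_gen_of_BM_fin_gen :
  BM_fin_gen A mul zero Ap M act base le -> A_fin_gen A M act base.
Proof.
  intros [gens Hgens]; destruct (BM_common_generators gens) as [l Hl].
  exists l; intro v.
  destruct (Hgens (lowerB v)) as [cs [Hcs Hv]]; simpl in Hv.
  assert (Hvv : lower v v) by apply lowerE, le_refl.
  rewrite Hv in Hvv; apply in_BM_span in Hvv.
  destruct Hvv as [Hb|[c [Hc [z [[s [w [Hs [Hw ->]]]] Hvz]]]]].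
  - left; apply le_base_eq, Hb.
  - destruct (Hl (snd c) w (proj2 (Hcs c Hc)) Hw) as [u [Hu [Hwu Hgen]]].
    assert (Hsu : le (act s u) v).
    { apply lowerE; rewrite Hv; apply in_BM_span; right; exists c; split; auto.
      exists (act s u); split; auto using le_refl; exists s, u; auto. }
    (* [v <= s w <= s u <= v], so [v] is an [A]-multiple of a generator *)
    assert (Ev : v = act s u).
    { apply le_anti; auto; eapply le_trans; eauto; apply le_act; auto. }
    destruct Hgen as [->|[h [m [Hh [Hm ->]]]]].
    + left; rewrite Ev; apply act_base.
    + right; exists (mul s h), m; rewrite actM; auto.
Qed.
(** * The free [B[A;A^+]]-module on [M] *)

(* [Q x c] encodes the element [c] in the [x]-th copy of [A]. *)
Definition fg_rel (Q : M -> A -> Prop) : Prop :=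
  exists L : list (M * A), forall x a,
    Q x a <-> a = zero \/ exists h c, Ap h /\ In (x, c) L /\ a = mul h c.

Definition unionR (Q R : M -> A -> Prop) : M -> A -> Prop := fun x a => Q x a \/ R x a.
Definition zeroR : M -> A -> Prop := fun _ a => a = zero.
Definition scaleR (S : A -> Prop) (Q : M -> A -> Prop) : M -> A -> Prop :=
  fun x a => a = zero \/ exists s b, S s /\ Q x b /\ a = mul s b.

Lemma fg_rel_zero Q x : fg_rel Q -> Q x zero.
Proof. intros [L HL]; apply HL; auto. Qed.

Lemma fg_rel_Ap Q x b h : fg_rel Q -> Ap h -> Q x b -> Q x (mul h b).
Proof.
  intros [L HL] Hh Hb; apply HL in Hb; apply HL.
  destruct Hb as [->|[h' [c [Hh' [Hin ->]]]]]; [left; apply mulr0|right].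
  exists (mul h h'), c; rewrite mulA; auto using ApM.
Qed.

Lemma fg_unionR Q R : fg_rel Q -> fg_rel R -> fg_rel (unionR Q R).
Proof.
  intros [L HL] [L' HL']; exists (L ++ L'); intros x a; unfold unionR.
  rewrite HL, HL'; split.
  - intros [[H|[h [c [H1 [H2 H3]]]]]|[H|[h [c [H1 [H2 H3]]]]]]; auto;
      right; exists h, c; auto using in_or_app.
  - intros [H|[h [c [H1 [H2 H3]]]]]; auto.
    apply in_app_or in H2; destruct H2; [left|right]; right; eauto.
Qed.

Lemma fg_zeroR : fg_rel zeroR.
Proof. exists []; intros x a; unfold zeroR; split; auto; intros [H|[h [c [_ [[] _]]]]]; auto. Qed.

Lemma fg_scaleR S Q : fg_subA A mul zero Ap S -> fg_rel Q -> fg_rel (scaleR S Q).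
Proof.
  intros [l Hl] [L HL].
  exists (flat_map (fun g => map (fun p => (fst p, mul g (snd p))) L) l).
  intros x a; unfold scaleR; split.
  - intros [H|[s [b [Hs [Hb ->]]]]]; auto.
    apply Hl in Hs; apply HL in Hb.
    destruct Hs as [->|[h [g [Hh [Hg ->]]]]]; [left; apply mul0|].
    destruct Hb as [->|[h' [c [Hh' [Hc ->]]]]]; [left; apply mulr0|].
    right; exists (mul h h'), (mul g c); split; [apply ApM; auto|split; [|apply mulACA]].
    apply in_flat_map; exists g; split; auto; apply in_map_iff; exists (x, c); auto.
  - intros [H|[h [c [Hh [Hin ->]]]]]; auto; right.
    apply in_flat_map in Hin; destruct Hin as [g [Hg Hin]].
    apply in_map_iff in Hin; destruct Hin as [[y c'] [E Hin]].
    simpl in E; injection E; intros; subst.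
    exists (mul h g), c'; split; [apply Hl; right; exists h, g; auto|split; [|apply mulA]].
    apply HL; right; exists one, c'; rewrite mul1; auto using Ap1.
Qed.

Lemma relext (Q R : M -> A -> Prop) : (forall x a, Q x a <-> R x a) -> Q = R.
Proof. intro H; apply functional_extensionality; intro x; apply predext; auto. Qed.

Lemma unionRA Q R T : unionR Q (unionR R T) = unionR (unionR Q R) T.
Proof. apply relext; unfold unionR; tauto. Qed.

Lemma unionRC Q R : unionR Q R = unionR R Q.
Proof. apply relext; unfold unionR; tauto. Qed.

Lemma union0R Q : fg_rel Q -> unionR zeroR Q = Q.
Proof.
  intro HQ; apply relext; unfold unionR, zeroR; intros x a; split; auto.
  intros [->|H]; [apply fg_rel_zero|]; auto.
Qed.

Lemma scaleR_unionr S Q R : scaleR S (unionR Q R) = unionR (scaleR S Q) (scaleR S R).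
Proof.
  apply relext; unfold scaleR, unionR; intros x a; split.
  - intros [H|[s [b [H1 [[H2|H2] H3]]]]]; eauto 10.
  - intros [[H|[s [b [H1 [H2 H3]]]]]|[H|[s [b [H1 [H2 H3]]]]]]; eauto 10.
Qed.

Lemma scaleR0 S : scaleR S zeroR = zeroR.
Proof.
  apply relext; unfold scaleR, zeroR; intros x a; split; auto.
  intros [H|[s [b [_ [-> ->]]]]]; auto using mulr0.
Qed.

Lemma scaleR_unionl S T Q : scaleR (B_union S T) Q = unionR (scaleR S Q) (scaleR T Q).
Proof.
  apply relext; unfold scaleR, unionR, B_union; intros x a; split.
  - intros [H|[s [b [[H1|H1] [H2 H3]]]]]; eauto 10.
  - intros [[H|[s [b [H1 [H2 H3]]]]]|[H|[s [b [H1 [H2 H3]]]]]]; eauto 10.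
Qed.

Lemma scaleR_prod S T Q : scaleR (B_prod A mul S T) Q = scaleR S (scaleR T Q).
Proof.
  apply relext; unfold scaleR, B_prod; intros x a; split.
  - intros [H|[u [b [[s [t [Hs [Ht ->]]]] [Hb ->]]]]]; auto.
    right; exists s, (mul t b); repeat split; auto.
    + right; exists t, b; auto.
    + symmetry; apply mulA.
  - intros [H|[s [b' [Hs [[->|[t [b [Ht [Hb ->]]]]] ->]]]]]; auto.
    + left; apply mulr0.
    + right; exists (mul s t), b; split; [exists s, t; auto|split; auto]; apply mulA.
Qed.

Lemma scaleR_Ap Q : fg_rel Q -> scaleR Ap Q = Q.
Proof.
  intro HQ; apply relext; unfold scaleR; intros x a; split.
  - intros [->|[s [b [Hs [Hb ->]]]]]; [apply fg_rel_zero|apply fg_rel_Ap]; auto.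
  - intro H; right; exists one, a; rewrite mul1; auto using Ap1.
Qed.

Lemma scaleR_B_zero Q : scaleR (B_zero A zero) Q = zeroR.
Proof.
  apply relext; unfold scaleR, B_zero, zeroR; intros x a; split; auto.
  intros [H|[s [b [-> [_ ->]]]]]; auto using mul0.
Qed.

Lemma fg_Sunion S T :
  fg_subA A mul zero Ap S -> fg_subA A mul zero Ap T -> fg_subA A mul zero Ap (B_union S T).
Proof.
  intros [l Hl] [l' Hl']; exists (l ++ l'); intro a; unfold B_union; rewrite Hl, Hl'; split.
  - intros [[H|[h [c [H1 [H2 H3]]]]]|[H|[h [c [H1 [H2 H3]]]]]]; auto;
      right; exists h, c; auto using in_or_app.
  - intros [H|[h [c [H1 [H2 H3]]]]]; auto.
    apply in_app_or in H2; destruct H2; [left|right]; right; eauto.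
Qed.

Lemma fg_Sprod S T :
  fg_subA A mul zero Ap S -> fg_subA A mul zero Ap T -> fg_subA A mul zero Ap (B_prod A mul S T).
Proof.
  intros [l Hl] [l' Hl']; exists (flat_map (fun g => map (mul g) l') l).
  intro a; unfold B_prod; split.
  - intros [s [t [Hs [Ht ->]]]]; apply Hl in Hs; apply Hl' in Ht.
    destruct Hs as [->|[h [g [Hh [Hg ->]]]]]; [left; apply mul0|].
    destruct Ht as [->|[h' [g' [Hh' [Hg' ->]]]]]; [left; apply mulr0|].
    right; exists (mul h h'), (mul g g'); split; [apply ApM; auto|split; [|apply mulACA]].
    apply in_flat_map; exists g; split; auto; apply in_map_iff; eauto.
  - intros [->|[h [c [Hh [Hin ->]]]]].
    + exists zero, zero; rewrite mul0; split; [apply Hl|split; [apply Hl'|]]; auto.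
    + apply in_flat_map in Hin; destruct Hin as [g [Hg Hin]].
      apply in_map_iff in Hin; destruct Hin as [g' [<- Hin]].
      exists (mul h g), g'; split; [apply Hl; right; exists h, g; auto|split; [|apply mulA]].
      apply Hl'; right; exists one, g'; rewrite mul1; auto using Ap1.
Qed.

Lemma fg_Ap : fg_subA A mul zero Ap Ap.
Proof.
  exists [one]; intro a; split.
  - intro H; right; exists a, one; rewrite mulr1; simpl; auto.
  - intros [->|[h [g [Hh [[<-|[]] ->]]]]]; [apply Ap0|rewrite mulr1; auto].
Qed.

Lemma fg_B_zero : fg_subA A mul zero Ap (B_zero A zero).
Proof. exists []; intro a; unfold B_zero; split; auto; intros [H|[h [c [_ [[] _]]]]]; auto. Qed.

Definition FreeB := {Q : M -> A -> Prop | fg_rel Q}.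

Definition FreeB_union (Q R : FreeB) : FreeB :=
  exist _ (unionR (proj1_sig Q) (proj1_sig R)) (fg_unionR _ _ (proj2_sig Q) (proj2_sig R)).
Definition FreeB_zero : FreeB := exist _ zeroR fg_zeroR.
(* Off finitely generated [S] the action is irrelevant and chosen to be trivial. *)
Definition FreeB_act (S : A -> Prop) (Q : FreeB) : FreeB :=
  match excluded_middle_informative (fg_subA A mul zero Ap S) with
  | left H => exist _ (scaleR S (proj1_sig Q)) (fg_scaleR S _ H (proj2_sig Q))
  | right _ => Q
  end.

Lemma FreeB_actE S Q :
  fg_subA A mul zero Ap S -> proj1_sig (FreeB_act S Q) = scaleR S (proj1_sig Q).
Proof. intro H; unfold FreeB_act; destruct excluded_middle_informative; easy. Qed.

Lemma FreeB_BModule : is_BModule A mul zero Ap FreeB FreeB_union FreeB_zero FreeB_act.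
Proof.
  repeat split; intros; apply sig_ext; simpl;
    repeat rewrite FreeB_actE by auto using fg_Sunion, fg_Sprod, fg_Ap, fg_B_zero; simpl.
  - apply unionRA.
  - apply unionRC.
  - apply union0R, proj2_sig.
  - apply scaleR_unionr.
  - apply scaleR0.
  - apply scaleR_unionl.
  - apply scaleR_prod.
  - apply scaleR_Ap, proj2_sig.
  - apply scaleR_B_zero.
Qed.

Definition img_rel (Q : M -> A -> Prop) : M -> Prop := fun w => exists x c, Q x c /\ w = act c x.

Lemma img_rel_gen_sub (L : list (M * A)) Q :
  (forall x a, Q x a <-> a = zero \/ exists h c, Ap h /\ In (x, c) L /\ a = mul h c) ->
  forall w, img_rel Q w <-> gen_subM A Ap M act base (map (fun p => act (snd p) (fst p)) L) w.
Proof.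
  intros HL w; split.
  - intros [x [c [Hxc ->]]]; apply HL in Hxc.
    destruct Hxc as [->|[h [c' [Hh [Hin ->]]]]]; [left; apply act0|right].
    exists h, (act c' x); rewrite actM; split; auto; split; auto.
    apply in_map_iff; exists (x, c'); auto.
  - intros [->|[h [m [Hh [Hm ->]]]]].
    + exists base, zero; rewrite act0; split; auto; apply HL; auto.
    + apply in_map_iff in Hm; destruct Hm as [[x c] [<- Hin]].
      exists x, (mul h c); rewrite actM; split; auto.
      apply HL; right; exists h, c; auto.
Qed.

Lemma down_img_inBM (Q : FreeB) : inBM A Ap M act base le (down M le (img_rel (proj1_sig Q))).
Proof.
  destruct Q as [Q HQ]; simpl; split; [split|split].
  - exists base; split; auto using le_refl.
    exists base, zero; rewrite act0; split; auto; apply fg_rel_zero; auto.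
  - intros h w Hh [z [[x [c [Hxc ->]]] Hwz]].
    exists (act (mul h c) x); split.
    + exists x, (mul h c); split; auto; apply fg_rel_Ap; auto.
    + rewrite actM; apply le_act; auto.
  - intros v w Hwv [z [Hz Hvz]]; exists z; split; auto; eapply le_trans; eauto.
  - destruct HQ as [L HL]; exists (map (fun p => act (snd p) (fst p)) L).
    intro w; split; intros [z [Hz Hwz]]; exists z; split; auto;
      apply (img_rel_gen_sub L Q HL); auto.
Qed.

Definition projB (Q : FreeB) : BMt A Ap M act base le :=
  exist _ (down M le (img_rel (proj1_sig Q))) (down_img_inBM Q).

Lemma projB_union Q R :
  proj1_sig (projB (FreeB_union Q R)) = B_union (proj1_sig (projB Q)) (proj1_sig (projB R)).
Proof.
  apply predext; intro w; simpl; unfold down, img_rel, B_union, unionR; split.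
  - intros [z [[x [c [[H|H] Hz]]] Hw]]; [left|right]; exists z; split; eauto.
  - intros [[z [[x [c [H Hz]]] Hw]]|[z [[x [c [H Hz]]] Hw]]]; exists z; split; eauto 6.
Qed.

Lemma projB_zero : proj1_sig (projB FreeB_zero) = BM_bot M base le.
Proof.
  apply predext; intro w; simpl; unfold down, img_rel, zeroR, BM_bot; split.
  - intros [z [[x [c [-> ->]]] Hw]]; rewrite act0 in Hw; auto.
  - intro H; exists base; split; auto; exists base, zero; rewrite act0; auto.
Qed.

Lemma projB_act S Q : fg_subA A mul zero Ap S ->
  proj1_sig (projB (FreeB_act S Q)) = BM_act A M act le S (proj1_sig (projB Q)).
Proof.
  intro HS; apply predext; intro w; simpl; rewrite FreeB_actE by auto.
  unfold down, img_rel, scaleR, BM_act; split.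
  - intros [z [[x [c [[->|[s [b [Hs [Hb ->]]]]] ->]]] Hw]].
    + exists base; rewrite act0 in Hw; split; auto.
      exists zero, base; rewrite act0; split; [destruct HS as [l Hl]; apply Hl; auto|].
      split; auto; exists base; split; auto using le_refl.
      exists base, zero; rewrite act0; split; auto; apply fg_rel_zero, proj2_sig.
    + exists (act s (act b x)); rewrite <- actM; split; auto.
      exists s, (act b x); rewrite actM; repeat split; auto.
      exists (act b x); split; auto using le_refl; exists x, b; auto.
  - intros [z [[s [v [Hs [[y [[x [c [Hxc ->]]] Hvy]] ->]]]] Hw]].
    exists (act (mul s c) x); split.
    + exists x, (mul s c); split; auto; right; exists s, c; auto.
    + eapply le_trans; eauto; rewrite actM; apply le_act; auto.
Qed.

Lemma projB_surj N : exists Q, projB Q = N.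
Proof.
  destruct (proj2_sig N) as [_ [_ [l Hl]]].
  set (L := map (fun m => (m, one)) l).
  set (Q := fun x a => a = zero \/ exists h c, Ap h /\ In (x, c) L /\ a = mul h c).
  assert (HQ : forall x a, Q x a <-> a = zero \/ exists h c, Ap h /\ In (x, c) L /\ a = mul h c)
    by reflexivity.
  assert (EL : map (fun p => act (snd p) (fst p)) L = l).
  { unfold L; rewrite map_map; simpl; rewrite <- (map_id l) at 2; apply map_ext, act1. }
  exists (exist _ Q (ex_intro _ L HQ)).
  apply sig_ext, predext; intro w; simpl.
  rewrite Hl; unfold down; split; intros [z [Hz Hw]]; exists z; split; auto;
    [rewrite <- EL|rewrite <- EL in Hz]; apply (img_rel_gen_sub L Q HQ); auto.
Qed.

(** * Cancellation and integrality in an [F1]-domain *)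

Section Domain.
Hypothesis HD : F1_domain A mul one zero Ap.

Lemma Ap_mul_neq0 a b : Ap a -> Ap b -> a <> zero -> b <> zero -> mul a b <> zero.
Proof. apply HD. Qed.

Lemma Ap_mul_cancel a b c : Ap a -> Ap b -> Ap c -> a <> zero -> b <> zero -> c <> zero ->
  mul a b = mul a c -> b = c.
Proof. apply HD. Qed.

Lemma Ap_of_mpow f n : 1 <= n -> Ap (mpow A mul one f n) -> Ap f.
Proof. apply HD. Qed.

Lemma Ap_denominator a : exists s u, Ap s /\ mul s u = one /\ Ap (mul s a).
Proof.
  destruct HD as [_ [_ [[Sm [HS [_ [_ [Hinv Hloc]]]]] _]]].
  destruct (Hloc a) as [s [Hs Hsa]]; destruct (Hinv s Hs) as [u Hu]; exists s, u; auto.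
Qed.

Lemma unit_mul_eq0 s u a : mul s u = one -> mul s a = zero -> a = zero.
Proof. intros H1 H2; rewrite <- (mul1 a), <- H1, (mulC s u), <- mulA, H2, mulr0; auto. Qed.

Lemma mul_neq0 a b : a <> zero -> b <> zero -> mul a b <> zero.
Proof.
  intros Ha Hb E.
  destruct (Ap_denominator a) as [s [u [Hs [Hsu Hsa]]]].
  destruct (Ap_denominator b) as [t [v [Ht [Htv Htb]]]].
  apply (Ap_mul_neq0 (mul s a) (mul t b)); auto.
  - intro E'; apply Ha; apply (unit_mul_eq0 s u a); auto.
  - intro E'; apply Hb; apply (unit_mul_eq0 t v b); auto.
  - rewrite mulACA, E, mulr0; auto.
Qed.

(* Clear denominators: [t t' x], [t t' y] and [s c] lie in [A^+], where cancellation holds. *)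
Lemma mul_cancel_r x y c : c <> zero -> mul x c = mul y c -> x = y.
Proof.
  intros Hc E.
  destruct (classic (x = zero)) as [->|Hx].
  { rewrite mul0 in E; destruct (classic (y = zero)); auto.
    exfalso; apply (mul_neq0 y c); auto. }
  destruct (classic (y = zero)) as [->|Hy].
  { rewrite mul0 in E; exfalso; apply (mul_neq0 x c); auto. }
  destruct (Ap_denominator c) as [s [u [Hs [Hsu Hsc]]]].
  destruct (Ap_denominator x) as [t [v [Ht [Htv Htx]]]].
  destruct (Ap_denominator y) as [t' [v' [Ht' [Htv' Hty]]]].
  set (d := mul t t'); set (e := mul v v').
  assert (Hde : mul d e = one) by (unfold d, e; rewrite mulACA, Htv, Htv', mul1; auto).
  assert (Hdx : Ap (mul d x)) by (unfold d; rewrite (mulC t t'), <- mulA; apply ApM; auto).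
  assert (Hdy : Ap (mul d y)) by (unfold d; rewrite <- mulA; apply ApM; auto).
  assert (E2 : mul d x = mul d y).
  { apply (Ap_mul_cancel (mul s c)); auto.
    - intro E'; apply Hc; apply (unit_mul_eq0 s u c); auto.
    - intro E'; apply Hx; apply (unit_mul_eq0 d e x); auto.
    - intro E'; apply Hy; apply (unit_mul_eq0 d e y); auto.
    - rewrite (mulACA s c d x), (mulACA s c d y), (mulC c x), (mulC c y), E; auto. }
  rewrite <- (mul1 x), <- (mul1 y), <- Hde, (mulC d e), <- !mulA, E2; auto.
Qed.

Lemma mpowD d k1 k2 :
  mpow A mul one d (k1 + k2) = mul (mpow A mul one d k1) (mpow A mul one d k2).
Proof. induction k1; simpl; [rewrite mul1|rewrite IHk1, mulA]; auto. Qed.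

(* Each nonzero generator [g] of [U] has a successor [g'] with [d g = h g'];
   a cycle [d^k g = H g] of this relation forces [d^k = H], and [A^+] is saturated. *)
Lemma Ap_of_stable_fg (d : A) (U : A -> Prop) (L : list A) :
  (forall a, U a <-> a = zero \/ exists h g, Ap h /\ In g L /\ a = mul h g) ->
  U one -> (forall b, U b -> U (mul d b)) -> Ap d.
Proof.
  intros HU H1 Hd.
  destruct (classic (d = zero)) as [->|Hd0]; [apply Ap0|].
  set (R := fun g g' => exists h, Ap h /\ mul d g = mul h g').
  assert (Hsucc : forall g, In g L -> g <> zero -> exists g', In g' L /\ g' <> zero /\ R g g').
  { intros g Hg Hg0.
    assert (Hdg : U (mul d g)) by (apply Hd, HU; right; exists one, g; rewrite mul1; auto using Ap1).
    apply HU in Hdg; destruct Hdg as [E|[h [g' [Hh [Hg' E]]]]];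
      [exfalso; apply (mul_neq0 d g); auto|].
    exists g'; split; [|split]; auto; [|exists h; auto].
    intros ->; rewrite mulr0 in E; apply (mul_neq0 d g); auto. }
  assert (Hne : exists g, In g L /\ g <> zero).
  { apply HU in H1; destruct H1 as [E|[h [g [Hh [Hg E]]]]].
    - exfalso; apply Hd0; rewrite <- (mulr1 d), E, mulr0; auto.
    - exists g; split; auto; intros ->; rewrite mulr0 in E.
      apply Hd0; rewrite <- (mulr1 d), E, mulr0; auto. }
  destruct (serial_clos_trans_cycle _ R L Hsucc Hne) as [g [Hg0 Hc]].
  assert (Hpow : forall x y, clos_trans A R x y ->
     exists k H, 1 <= k /\ Ap H /\ mul (mpow A mul one d k) x = mul H y).
  { intros x y Hxy; induction Hxy as [x y [h [Hh E]]|x y z _ [k1 [H1' [Hk1 [HH1 E1]]]]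
                                                      _ [k2 [H2 [Hk2 [HH2 E2]]]]].
    - exists 1, h; simpl; rewrite mulr1; auto.
    - exists (k2 + k1), (mul H1' H2); split; [lia|split; [apply ApM; auto|]].
      rewrite mpowD, <- mulA, E1, mulCA, E2, mulA; auto. }
  destruct (Hpow g g Hc) as [k [H [Hk [HH E]]]].
  apply (Ap_of_mpow d k); auto; rewrite (mul_cancel_r _ _ g Hg0 E); auto.
Qed.
End Domain.
(** * Freeness from a section of the projection *)

Section Splitting.
Hypothesis HD : F1_domain A mul one zero Ap.
Variable sec : BMt A Ap M act base le -> FreeB.
Hypothesis sec_proj : forall N, projB (sec N) = N.
Hypothesis sec_union : forall N1 N2 N3,
  proj1_sig N3 = B_union (proj1_sig N1) (proj1_sig N2) -> sec N3 = FreeB_union (sec N1) (sec N2).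
Hypothesis sec_bot : forall N, proj1_sig N = BM_bot M base le -> sec N = FreeB_zero.
Hypothesis sec_act : forall S N N', fg_subA A mul zero Ap S ->
  proj1_sig N' = BM_act A M act le S (proj1_sig N) -> sec N' = FreeB_act S (sec N).

Definition coef (v : M) : M -> A -> Prop := proj1_sig (sec (lowerB v)).

Lemma fg_coef v : fg_rel (coef v).
Proof. exact (proj2_sig (sec (lowerB v))). Qed.

Lemma down_img_coef v : down M le (img_rel (coef v)) = lower v.
Proof. exact (f_equal (@proj1_sig _ _) (sec_proj (lowerB v))). Qed.

Lemma coef_le v x c : coef v x c -> le (act c x) v.
Proof.
  intro H; apply lowerE; rewrite <- down_img_coef.
  exists (act c x); split; auto using le_refl; exists x, c; auto.
Qed.

Lemma coef_lift v : exists x c, coef v x c /\ v = act c x.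
Proof.
  assert (Hv : lower v v) by apply lowerE, le_refl.
  rewrite <- down_img_coef in Hv; destruct Hv as [z [[x [c [Hxc ->]]] Hvz]].
  exists x, c; split; auto; apply le_anti; auto; apply coef_le; auto.
Qed.

Lemma coef_mono w v x c : le w v -> coef w x c -> coef v x c.
Proof.
  intros Hwv H; unfold coef.
  rewrite (sec_union (lowerB v) (lowerB w) (lowerB v)); [simpl; right; auto|].
  apply predext; intro z; simpl; unfold B_union; rewrite !lowerE; split; auto.
  intros [H1|H1]; eauto using le_trans.
Qed.

Lemma coef_base x c : coef base x c -> c = zero.
Proof.
  unfold coef; rewrite (sec_bot (lowerB base)); auto.
  apply predext; intro z; simpl; rewrite lowerE; reflexivity.
Qed.

Definition Ap_multiples (a : A) : A -> Prop := fun s => s = zero \/ exists h, Ap h /\ s = mul h a.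

Lemma fg_Ap_multiples a : fg_subA A mul zero Ap (Ap_multiples a).
Proof.
  exists [a]; intro s; unfold Ap_multiples; split.
  - intros [H|[h [Hh ->]]]; auto; right; exists h, a; simpl; auto.
  - intros [H|[h [g [Hh [[<-|[]] ->]]]]]; eauto.
Qed.

Lemma lower_act a v : lower (act a v) = BM_act A M act le (Ap_multiples a) (lower v).
Proof.
  apply predext; intro z; rewrite lowerE; unfold BM_act, down; split.
  - intro H; exists (act a v); split; auto.
    exists a, v; split; [right; exists one; rewrite mul1; auto using Ap1|].
    split; auto; apply lowerE, le_refl.
  - intros [y [[s [w [[->|[h [Hh ->]]] [Hw ->]]]] Hzy]]; apply lowerE in Hw;
      eapply le_trans; eauto.
    + rewrite act0; apply le_base.
    + eapply le_trans; [apply le_act; eauto|]; apply le_actAp; auto.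
Qed.

Lemma coef_act a v : coef (act a v) = scaleR (Ap_multiples a) (coef v).
Proof.
  unfold coef; rewrite (sec_act (Ap_multiples a) (lowerB v) (lowerB (act a v))).
  - apply FreeB_actE, fg_Ap_multiples.
  - apply fg_Ap_multiples.
  - apply lower_act.
Qed.

Lemma coef_act_in a v x b h : Ap h -> coef v x b -> coef (act a v) x (mul (mul h a) b).
Proof.
  intros Hh H; rewrite coef_act; right; exists (mul h a), b; split; [right; eauto|auto].
Qed.

Lemma coef_act_out a v x c : coef (act a v) x c ->
  c = zero \/ exists h b, Ap h /\ coef v x b /\ c = mul (mul h a) b.
Proof.
  rewrite coef_act; intros [H|[s [b [[->|[h [Hh ->]]] [Hb ->]]]]]; auto.
  - left; apply mul0.
  - right; eauto.
Qed.

Lemma coef_act_self a x b : coef x x b -> coef (act a x) x (mul a b).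
Proof. intro H; pose proof (coef_act_in a x x b one Ap1 H) as H'; rewrite mul1 in H'; auto. Qed.

Definition basic (x : M) : Prop := coef x x one.

Lemma basic_lift v : v <> base -> exists x c, basic x /\ c <> zero /\ v = act c x.
Proof.
  intro Hv; destruct (coef_lift v) as [x [c [H E]]].
  assert (Hc : c <> zero) by (intros ->; apply Hv; rewrite E; apply act0).
  exists x, c; split; auto.
  rewrite E in H; apply coef_act_out in H.
  destruct H as [H|[h [b [Hh [Hb Ec]]]]]; [contradiction|].
  assert (Ehb : mul h b = one).
  { apply (mul_cancel_r HD _ _ c Hc); rewrite mul1; rewrite Ec at 2.
    rewrite <- !mulA, (mulC b c); auto. }
  unfold basic; rewrite <- Ehb; apply fg_rel_Ap; auto using fg_coef.
Qed.

Lemma act_basic_neq_base e a : basic e -> a <> zero -> act a e <> base.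
Proof.
  intros He Ha E; pose proof (coef_act_self a e one He) as H.
  rewrite E in H; apply coef_base in H; rewrite mulr1 in H; auto.
Qed.

(* The coefficients of [e] in [coef e] form a finitely generated [A^+]-submodule
   containing [1] and stable under [d]. *)
Lemma coef_basic_Ap e d : basic e -> coef e e d -> Ap d.
Proof.
  intros He Hd; destruct (fg_coef e) as [L HL].
  set (L' := map snd (filter (fun p => if excluded_middle_informative (fst p = e)
                                      then true else false) L)).
  apply (Ap_of_stable_fg HD d (coef e e) L'); auto.
  - intro a; rewrite HL; split; intros [H|[h [c [Hh [Hin E]]]]]; auto; right; exists h, c;
      repeat split; auto; unfold L' in *.
    + apply in_map_iff; exists (e, c); split; auto; apply filter_In; split; auto; simpl.
      destruct excluded_middle_informative; easy.
    + apply in_map_iff in Hin; destruct Hin as [[y c'] [<- Hin]].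
      apply filter_In in Hin; destruct Hin as [Hin Hf]; simpl in Hf.
      destruct excluded_middle_informative as [->|]; easy.
  - intros b Hb; apply (coef_mono (act d e)); [apply coef_le; auto|].
    apply coef_act_self; auto.
Qed.

Lemma act_basic_div e c c' : basic e -> c <> zero -> act c e = act c' e ->
  exists k, Ap k /\ c = mul k c'.
Proof.
  intros He Hc E; pose proof (coef_act_self c e one He) as H.
  rewrite mulr1, E in H; apply coef_act_out in H.
  destruct H as [H|[h [b [Hh [Hb ->]]]]]; [contradiction|].
  exists (mul h b); split; [apply ApM; [|apply (coef_basic_Ap e b)]; auto|].
  rewrite <- mulA, (mulC c' b), mulA; auto.
Qed.

Lemma act_basic_inj e c c' : basic e -> c <> zero -> c' <> zero -> act c e = act c' e -> c = c'.
Proof.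
  intros He Hc Hc' E.
  destruct (act_basic_div e c c' He Hc E) as [k [Hk Ek]].
  destruct (act_basic_div e c' c He Hc' (eq_sym E)) as [k' [Hk' Ek']].
  assert (Ekk : mul k k' = one).
  { apply (mul_cancel_r HD _ _ c Hc); rewrite mul1; rewrite Ek at 2; rewrite Ek', mulA; auto. }
  apply Ap_unit in Ekk; auto; rewrite Ek, Ekk, mul1; auto.
Qed.

Definition assoc (x y : M) : Prop := exists d d', y = act d x /\ x = act d' y.

Lemma assoc_refl x : assoc x x.
Proof. exists one, one; rewrite act1; auto. Qed.

Lemma assoc_sym x y : assoc x y -> assoc y x.
Proof. intros [d [d' [H1 H2]]]; exists d', d; auto. Qed.

Lemma assoc_trans x y z : assoc x y -> assoc y z -> assoc x z.
Proof.
  intros [d [d' [H1 H2]]] [f [f' [H3 H4]]]; exists (mul f d), (mul d' f').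
  rewrite !actM, <- H1, <- H3, <- H4, <- H2; auto.
Qed.

Lemma assoc_class x y : assoc x y -> assoc x = assoc y.
Proof.
  intro H; apply predext; intro z; split; intro H'.
  - eapply assoc_trans; [apply assoc_sym, H|exact H'].
  - eapply assoc_trans; eauto.
Qed.

(* With [a x = b y = v], [coef v] contains [(x, a)] and [(y, b)]; writing
   [a = h d b] and [b = h' d' a] gives [d y <= x], [d' x <= y] and
   [h h' d d' = 1], so [d], [d'] are inverse up to units of [A^+]. *)
Lemma assoc_of_act_basic_eq x y a b :
  basic x -> basic y -> a <> zero -> act a x = act b y -> assoc x y.
Proof.
  intros Hx Hy Ha E.
  assert (Hb : b <> zero) by (intros ->; rewrite act0 in E; apply (act_basic_neq_base x a); auto).
  pose proof (coef_act_self a x one Hx) as H1; rewrite mulr1, E in H1.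
  apply coef_act_out in H1; destruct H1 as [H1|[h [d [Hh [Hd Ea]]]]]; [contradiction|].
  pose proof (coef_act_self b y one Hy) as H2; rewrite mulr1, <- E in H2.
  apply coef_act_out in H2; destruct H2 as [H2|[h' [d' [Hh' [Hd' Eb]]]]]; [contradiction|].
  apply coef_le in Hd; apply coef_le in Hd'.
  assert (Eu : mul (mul h h') (mul d d') = one).
  { apply (mul_cancel_r HD _ _ a Ha); rewrite mul1; rewrite Ea at 2; rewrite Eb.
    rewrite <- !mulA; f_equal; f_equal; rewrite mulA, mulC, (mulC d d'); auto. }
  exists d, d'; split; apply le_anti; auto.
  - eapply le_trans; [|apply le_act; exact Hd']; rewrite <- actM.
    rewrite <- (act1 y) at 1; rewrite <- Eu; apply le_actAp, ApM; auto.
  - eapply le_trans; [|apply le_act; exact Hd]; rewrite <- actM.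
    rewrite <- (act1 x) at 1; rewrite <- Eu, (mulC d d'); apply le_actAp, ApM; auto.
Qed.

Definition basic_class := {C : M -> Prop | exists x, basic x /\ x <> base /\ C = assoc x}.

Definition class_rep (i : basic_class) : M :=
  proj1_sig (constructive_indefinite_description _ (proj2_sig i)).

Lemma class_repP i : basic (class_rep i) /\ class_rep i <> base /\ proj1_sig i = assoc (class_rep i).
Proof. unfold class_rep; destruct constructive_indefinite_description as [x Hx]; exact Hx. Qed.

Lemma A_free_of_section : A_free A zero M act base.
Proof.
  exists basic_class, class_rep; split; [|split].
  - intros i a Ha; apply act_basic_neq_base; auto; apply class_repP.
  - intros i j a b Ha Hb E.
    destruct (class_repP i) as [Hi [_ Ei]], (class_repP j) as [Hj [_ Ej]].
    assert (Hij : i = j).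
    { apply sig_ext; rewrite Ei, Ej; apply assoc_class, (assoc_of_act_basic_eq _ _ a b); auto. }
    subst j; split; auto; eapply act_basic_inj; eauto.
  - intros v Hv; destruct (basic_lift v Hv) as [x [c [Hx [Hc ->]]]].
    assert (Hxb : x <> base) by (intros ->; apply Hv; apply act_base).
    set (i := exist _ (assoc x) (ex_intro _ x (conj Hx (conj Hxb eq_refl))) : basic_class).
    destruct (class_repP i) as [_ [_ Ei]]; simpl in Ei.
    assert (H : assoc x (class_rep i)) by (rewrite Ei; apply assoc_refl).
    destruct H as [d [d' [_ Hd']]].
    exists i, (mul c d'); rewrite actM, <- Hd'; split; auto.
    intro E; apply Hv; rewrite Hd', <- actM, E; apply act0.
Qed.
End Splitting.

Lemma A_free_of_BM_projective :
  F1_domain A mul one zero Ap -> BM_projective A mul zero Ap M act base le ->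
  A_free A zero M act base.
Proof.
  intros HD HP.
  destruct (HP FreeB FreeB_union FreeB_zero FreeB_act FreeB_BModule projB
              projB_union projB_zero projB_act projB_surj) as [sec [H1 [H2 [H3 H4]]]].
  exact (A_free_of_section HD sec H1 H2 H3 H4).
Qed.

End Theory.

Theorem mainTheorem16 (A : Type) (mul : A -> A -> A) (one zero : A) (Ap : A -> Prop)
  (HA : F1_pair A mul one zero Ap)
  (M : Type) (act : A -> M -> M) (base : M)
  (HM : is_Amodule A mul one zero M act base)
  (le : M -> M -> Prop) (Hle : is_POmodule A mul Ap M act le) :
  (BM_fin_gen A mul zero Ap M act base le -> A_fin_gen A M act base) /\
  (F1_domain A mul one zero Ap ->
   BM_projective A mul zero Ap M act base le -> A_free A zero M act base).
Proof.
  split.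
  - exact (A_fin_gen_of_BM_fin_gen A mul one zero Ap M act base le HA HM Hle).
  - exact (A_free_of_BM_projective A mul one zero Ap M act base le HA HM Hle).
Qed.
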